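(* Either $g(n)\le 3$ for all $n$ or $g(n)\to\infty$; either $h(n)\le 3$ for all $n$ or $h(n)\to\infty$; and either $f(n)\le 9$ for all $n$ or $f(n)\to\infty$.
   Context: For a digraph $D$, $\chi(D)$ is the chromatic number of its underlying graph; $D^{-1}$ is $D$ with arcs reversed; $D_1\times D_2$ has vertex set $V(D_1)\times V(D_2)$ and arc $(x,y)\to(x',y')$ iff $(x,x')$ is an arc of $D_1$ and $(y,y')$ an arc of $D_2$ (graph product $G\times H$ analogously with edges: $(x,y)\sim(x',y')$ iff $xx'\in E(G)$, $yy'\in E(H)$). $f(n)=\min\{\chi(G\times H):\chi(G),\chi(H)\ge n\}$ over graphs; $g(n)=\min\{\chi(D_1\times D_2):\chi(D_1),\chi(D_2)\ge n\}$ and $h(n)=\min\{\max\{\chi(D_1\times D_2),\chi(D_1\times D_2^{-1})\}:\chi(D_1),\chi(D_2)\ge n\}$ over digraphs (digons allowed). These functions are non-decreasing in $n$. *)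

From mathcomp Require Import all_boot.
From Stdlib Require Import ClassicalEpsilon.
Set Implicit Arguments. Unset Strict Implicit. Unset Printing Implicit Defensive.

Definition is_graph (T : finType) (e : rel T) : Prop :=
  (forall x, ~~ e x x) /\ (forall x y, e x y = e y x).

(* A (finite) digraph: loopless arc relation; digons (x->y and y->x) allowed. *)
Definition is_digraph (T : finType) (a : rel T) : Prop := forall x, ~~ a x x.

Definition colorable (T : finType) (e : rel T) (k : nat) : bool :=
  [exists c : {ffun T -> 'I_k}, [forall x, [forall y, e x y ==> (c x != c y)]]].

(* chromatic number: least k <= #|T| admitting a proper colouring
   (always exists for loopless relations, since #|T| colours suffice). *)
Definition chi (T : finType) (e : rel T) : nat :=
  find (colorable e) (iota 0 #|T|.+1).

Definition underlying (T : finType) (a : rel T) : rel T := fun x y => a x y || a y x.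
Definition chiD (T : finType) (a : rel T) : nat := chi (underlying a).

Definition prodrel (T U : finType) (e : rel T) (e' : rel U) : rel (T * U)%type :=
  fun p q => e p.1 q.1 && e' p.2 q.2.

Definition revrel (T : finType) (a : rel T) : rel T := fun x y => a y x.

(* minimum of a set of naturals (chosen by epsilon; it exists whenever P is nonempty) *)
Definition is_min (P : nat -> Prop) (m : nat) : Prop := P m /\ forall k, P k -> m <= k.
Definition natmin (P : nat -> Prop) : nat := epsilon (inhabits 0) (is_min P).

Definition f_vals (n k : nat) : Prop :=
  exists (T U : finType) (e : rel T) (e' : rel U),
    [/\ is_graph e, is_graph e', n <= chi e, n <= chi e' & chi (prodrel e e') = k].
Definition g_vals (n k : nat) : Prop :=
  exists (T U : finType) (a : rel T) (a' : rel U),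
    [/\ is_digraph a, is_digraph a', n <= chiD a, n <= chiD a' & chiD (prodrel a a') = k].
Definition h_vals (n k : nat) : Prop :=
  exists (T U : finType) (a : rel T) (a' : rel U),
    [/\ is_digraph a, is_digraph a', n <= chiD a, n <= chiD a' &
        maxn (chiD (prodrel a a')) (chiD (prodrel a (revrel a'))) = k].

Definition f (n : nat) : nat := natmin (f_vals n).
Definition g (n : nat) : nat := natmin (g_vals n).
Definition h (n : nat) : nat := natmin (h_vals n).

Definition tends_to_infty (u : nat -> nat) : Prop :=
  forall M, exists N, forall n, N <= n -> M < u n.

From mathcomp Require Import all_boot zify.
From Stdlib Require Import Classical ClassicalEpsilon.
Set Implicit Arguments. Unset Strict Implicit. Unset Printing Implicit Defensive.

(* The arc digraph [arcrel a] of a digraph [a] has the arcs of [a] as vertices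
   and an arc [(x, y) -> (y, z)]; its chromatic number is at least [log2 chiD a].
   Arc digraphs commute with products up to homomorphism:
   [arcrel a * arcrel b -> arcrel (a * b)] and
   [arcrel a * (arcrel b)^-1 -> arcrel (a * b^-1)].
   Since [arcrel (arcrel (Kn c))] is [(c - 1)]-colourable for [c >= 4], taking
   [c - 3] double arc digraphs of factors of huge chromatic number whose
   products are [c]-colourable yields factors of chromatic number [>= n] with
   3-colourable products.  Hence if [g] (resp. [h]) stays bounded by some [c]
   at arbitrarily large arguments, then [g n <= 3] (resp. [h n <= 3]) for
   every [n].  For graphs both digraph products are the graph product, and the
   two resulting 3-colourings combine into a 9-colouring, so likewise
   [f n <= 9]. *)

Section Colorings.
Variables (T : finType) (e : rel T).

Lemma colorableP k :
  colorable e k <-> exists c : T -> 'I_k, forall x y, e x y -> c x != c y.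
Proof.
split=> [/existsP [c /forallP Hc] | [c Hc]].
- exists c => x y exy.
  by move: (Hc x) => /forallP /(_ y) /implyP; apply.
- apply/existsP; exists [ffun x => c x].
  apply/forallP => x; apply/forallP => y; apply/implyP => exy.
  by rewrite !ffunE; apply: Hc.
Qed.

Lemma colorable_fun (C : finType) (c : T -> C) k :
  #|C| <= k -> (forall x y, e x y -> c x != c y) -> colorable e k.
Proof.
move=> leCk Hc; apply/colorableP.
exists (fun x => widen_ord leCk (enum_rank (c x))) => x y exy.
apply: contraNneq (Hc x y exy) => /(congr1 val) E.
by apply/eqP/enum_rank_inj/val_inj.
Qed.

Lemma colorable_loopless k : colorable e k -> forall x, ~~ e x x.
Proof. by move=> /colorableP [c Hc] x; apply/negP => /Hc; rewrite eqxx. Qed.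

Lemma colorable_card : (forall x, ~~ e x x) -> colorable e #|T|.
Proof.
move=> loopless; apply: (@colorable_fun T id) => // x y.
by apply: contraTneq => ->; apply: loopless.
Qed.

Lemma colorable_widen k k' : colorable e k -> k <= k' -> colorable e k'.
Proof.
by move=> /colorableP [c Hc] lekk'; apply: (@colorable_fun _ c); rewrite ?card_ord.
Qed.

Lemma chi_min k : colorable e k -> chi e <= k.
Proof.
have chi_le_small j : j <= #|T| -> colorable e j -> chi e <= j.
  move=> leJT colj; rewrite leqNgt; apply/negP => /(before_find 0).
  by rewrite nth_iota ?add0n // colj.
move=> colk; case: (leqP k #|T|) => [lekT|ltTk]; first exact: chi_le_small lekT colk.
apply: leq_trans _ (ltnW ltTk).
exact: chi_le_small (leqnn _) (colorable_card (colorable_loopless colk)).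
Qed.

Lemma colorable_chi : (forall x, ~~ e x x) -> colorable e (chi e).
Proof.
move=> loopless.
have has_col : has (colorable e) (iota 0 #|T|.+1).
  by apply/hasP; exists #|T|; [rewrite mem_iota add0n ltnSn | exact: colorable_card].
have := nth_find 0 has_col; rewrite nth_iota ?add0n //.
by move: has_col; rewrite has_find size_iota.
Qed.

Lemma card_le_colorable_complete k :
  (forall x y, x != y -> e x y) -> colorable e k -> #|T| <= k.
Proof.
move=> complete /colorableP [c Hc].
have c_inj : injective c.
  by move=> x y Exy; apply: contraTeq (eqxx (c y)) => /complete /Hc; rewrite Exy.
by have := leq_card c c_inj; rewrite card_ord.
Qed.

Lemma eq_colorable (e' : rel T) k : e =2 e' -> colorable e k = colorable e' k.
Proof.
move=> ee'; apply: eq_existsb => c; apply: eq_forallb => x.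
by apply: eq_forallb => y; rewrite ee'.
Qed.

Lemma eq_chi (e' : rel T) : e =2 e' -> chi e = chi e'.
Proof. by move=> ee'; apply: eq_find => k; apply: eq_colorable. Qed.

End Colorings.

Lemma colorable_hom (T T' : finType) (e : rel T) (e' : rel T') (h : T -> T') k :
  {homo h : x y / e x y >-> e' x y} -> colorable e' k -> colorable e k.
Proof.
move=> hom_h /colorableP [c Hc].
apply: (@colorable_fun _ _ _ (c \o h)); first by rewrite card_ord.
by move=> x y /hom_h /Hc.
Qed.

Lemma underlying_hom (T T' : finType) (a : rel T) (a' : rel T') (h : T -> T') :
  {homo h : x y / a x y >-> a' x y} ->
  {homo h : x y / underlying a x y >-> underlying a' x y}.
Proof. by move=> hom_h x y /orP [/hom_h | /hom_h]; rewrite /underlying => ->; rewrite ?orbT. Qed.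

Lemma colorable_underlying_fun (T C : finType) (a : rel T) (c : T -> C) k :
  #|C| <= k -> (forall x y, a x y -> c x != c y) -> colorable (underlying a) k.
Proof.
move=> leCk Hc; apply: (colorable_fun (c := c) leCk) => x y /orP [/Hc // | /Hc].
by rewrite eq_sym.
Qed.

Lemma underlying_loopless (T : finType) (a : rel T) :
  is_digraph a -> forall x, ~~ underlying a x x.
Proof. by move=> Ha x; rewrite /underlying orbb Ha. Qed.

Lemma underlying_graph (T : finType) (a : rel T) :
  is_digraph a -> is_graph (underlying a).
Proof. by move=> Ha; split=> [|x y]; [apply: underlying_loopless | rewrite /underlying orbC]. Qed.

Lemma colorable_chiD (T : finType) (a : rel T) :
  is_digraph a -> colorable (underlying a) (chiD a).
Proof. by move=> Ha; apply/colorable_chi/underlying_loopless. Qed.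

Lemma chiD_graph (T : finType) (e : rel T) : is_graph e -> chiD e = chi e.
Proof. by move=> [_ e_sym]; apply: eq_chi => x y; rewrite /underlying e_sym orbb. Qed.

Lemma prodrel_digraph (T U : finType) (a : rel T) (b : rel U) :
  is_digraph a -> is_digraph (prodrel a b).
Proof. by move=> Ha p; rewrite /prodrel (negbTE (Ha _)). Qed.

Definition Kn (n : nat) : rel 'I_n := fun x y => x != y.
Arguments Kn : clear implicits.

Lemma Kn_graph n : is_graph (Kn n).
Proof. by split=> [x|x y]; rewrite /Kn ?eqxx // eq_sym. Qed.

Lemma Kn_digraph n : is_digraph (Kn n).
Proof. exact: (Kn_graph n).1. Qed.

Lemma Kn_chi n : n <= chi (Kn n).
Proof.
rewrite -[n in n <= _]card_ord.
by apply: card_le_colorable_complete (colorable_chi (Kn_graph n).1).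
Qed.

Lemma Kn_chiD n : n <= chiD (Kn n).
Proof. by rewrite chiD_graph; [apply: Kn_chi | apply: Kn_graph]. Qed.

Lemma hom_Kn_of_colorable (T : finType) (a : rel T) c :
  colorable (underlying a) c -> exists h : T -> 'I_c, {homo h : x y / a x y >-> Kn c x y}.
Proof.
by move=> /colorableP [h Hh]; exists h => x y axy; apply: Hh; rewrite /underlying axy.
Qed.

Definition arcs (T : finType) (a : rel T) : finType := {p : T * T | a p.1 p.2}.

Definition arcrel (T : finType) (a : rel T) : rel (arcs a) :=
  fun p q => (val p).2 == (val q).1.
Arguments arcrel {T} a p q.

Definition arc2 (T : finType) (a : rel T) := arcrel (arcrel a).
Arguments arc2 {T} a _ _.

Lemma arcrel_digraph (T : finType) (a : rel T) : is_digraph a -> is_digraph (arcrel a).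
Proof.
by move=> Ha [[x y] /= axy]; apply: contraTN (axy); rewrite /arcrel /= => /eqP <-; apply: Ha.
Qed.

Lemma arc2_digraph (T : finType) (a : rel T) : is_digraph a -> is_digraph (arc2 a).
Proof. by move=> Ha; do 2 apply: arcrel_digraph. Qed.

Section ArcMap.
Variables (T T' : finType) (a : rel T) (a' : rel T') (h : T -> T').
Hypothesis hom_h : {homo h : x y / a x y >-> a' x y}.

Definition arc_map (p : arcs a) : arcs a' :=
  exist _ (h (val p).1, h (val p).2) (hom_h (valP p)).

Lemma arc_map_hom : {homo arc_map : p q / arcrel a p q >-> arcrel a' p q}.
Proof. by move=> p q /eqP E; rewrite /arcrel /= E. Qed.

End ArcMap.

Lemma colorable_arcrel (T : finType) (a : rel T) c :
  colorable (underlying a) c -> colorable (underlying (arcrel a)) c.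
Proof.
move=> /hom_Kn_of_colorable [h hom_h].
apply: (colorable_underlying_fun (c := fun p : arcs a => h (val p).1)).
  by rewrite card_ord.
by move=> [[x y] axy] [[y' z] ayz]; rewrite /arcrel /= => /eqP <-; apply: hom_h.
Qed.

(* For [4 <= m], the pairs [{(pair_code m i).1, (pair_code m i).2}], [i <= m],
   are distinct 2-subsets of [{0, ..., m-1}]. *)
Definition pair_code (m i : nat) : nat * nat :=
  if i < m.-1 then (i, i.+1) else if i == m.-1 then (m.-1, 0) else (0, 2).

Definition in_pair_code (m z i : nat) : bool :=
  (z == (pair_code m i).1) || (z == (pair_code m i).2).

Definition separating_point (m i j : nat) : nat :=
  if in_pair_code m (pair_code m i).1 j then (pair_code m i).2 else (pair_code m i).1.

Lemma separating_pointP m i j : 4 <= m -> i <= m -> j <= m -> i != j ->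
  in_pair_code m (separating_point m i j) i && ~~ in_pair_code m (separating_point m i j) j.
Proof.
move=> le4m leim lejm neij; rewrite /separating_point /in_pair_code /pair_code.
by repeat case: ifP => /=; lia.
Qed.

Lemma separating_point_lt m i j : 4 <= m -> separating_point m i j < m.
Proof.
by move=> le4m; rewrite /separating_point /in_pair_code /pair_code; repeat case: ifP => /=; lia.
Qed.

(* The arc [i -> j] gets a point of the pair of [i] outside the pair of [j],
   while the next arc [j -> l] gets a point of the pair of [j]. *)
Lemma colorable_arcrel_Kn m : 4 <= m -> colorable (underlying (arcrel (Kn m.+1))) m.
Proof.
move=> le4m.
pose col (p : arcs (Kn m.+1)) : 'I_m :=
  Ordinal (separating_point_lt (val p).1 (val p).2 le4m).
apply: (colorable_underlying_fun (c := col)); first by rewrite card_ord.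
move=> [[i j] /= neij] [[j' l] /= nejl]; rewrite /arcrel /= => /eqP Ej.
subst j'; apply/negP => /eqP /(congr1 val) /= E.
have le_m (w : 'I_m.+1) : w <= m by rewrite -ltnS.
have := separating_pointP le4m (le_m i) (le_m j) neij.
have := separating_pointP le4m (le_m j) (le_m l) nejl.
by rewrite E => /andP [-> _] /andP [_].
Qed.

(* A proper 3-colouring of the walks [i -> j -> l] of [Kn 4] (the vertices of
   [arc2 (Kn 4)]), stored at index [16 i + 4 j + l]. *)
Definition walk_color_table : seq nat :=
  [:: 0; 0; 0; 0; 0; 0; 0; 0; 0; 1; 0; 0; 0; 1; 1; 0; 0; 1; 2; 2; 0; 0; 0; 0;
      1; 1; 0; 2; 1; 1; 1; 0; 0; 2; 2; 2; 0; 0; 0; 0; 0; 0; 0; 0; 1; 1; 1; 0;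
      0; 2; 2; 2; 0; 0; 0; 0; 0; 2; 0; 0; 0; 0; 0; 0].

Definition walk_color (i j l : 'I_4) : 'I_3 :=
  inord (nth 0 walk_color_table (16 * i + 4 * j + l)).

Lemma walk_color_proper (i j l m : 'I_4) :
  i != j -> j != l -> l != m -> walk_color i j l != walk_color j l m.
Proof.
case: i => [[|[|[|[|?]]]] ?] //; case: j => [[|[|[|[|?]]]] ?] //;
case: l => [[|[|[|[|?]]]] ?] //; case: m => [[|[|[|[|?]]]] ?] //;
by rewrite /walk_color -!val_eqE /= ?inordK.
Qed.

Lemma colorable_arc2_K4 : colorable (underlying (arc2 (Kn 4))) 3.
Proof.
pose col (q : arcs (arcrel (Kn 4))) : 'I_3 :=
  walk_color (val (val q).1).1 (val (val q).1).2 (val (val q).2).2.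
apply: (colorable_underlying_fun (c := col)); first by rewrite card_ord.
move=> [[[[i j] nij] [[j' l] njl]] /= Ej] [[p [[l' m] nlm]] /= El].
rewrite /arcrel /col /= => /eqP /= Ep; subst p.
move: Ej El (njl) (nlm); rewrite /arcrel /= => /eqP <- /eqP <- njl' nlm'.
exact: walk_color_proper nij njl' nlm'.
Qed.

Lemma colorable_arc2_Kn c : 4 <= c -> colorable (underlying (arc2 (Kn c))) c.-1.
Proof.
case: c => [|[|[|[|[|k]]]]] // _; first exact: colorable_arc2_K4.
exact/colorable_arcrel/colorable_arcrel_Kn.
Qed.

Lemma colorable_arc2 (T : finType) (a : rel T) c :
  4 <= c -> colorable (underlying a) c -> colorable (underlying (arc2 a)) c.-1.
Proof.
move=> le4c /hom_Kn_of_colorable [h hom_h].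
exact: colorable_hom (underlying_hom (arc_map_hom (arc_map_hom hom_h))) (colorable_arc2_Kn le4c).
Qed.

(* Colour [x] by the set of colours of the arcs entering [x]: an arc [x -> y]
   has a colour that enters [y] but not [x]. *)
Lemma colorable_exp2_of_arcrel (T : finType) (a : rel T) k :
  colorable (underlying (arcrel a)) k -> colorable (underlying a) (2 ^ k).
Proof.
move=> /colorableP [col Hcol].
pose into (x : T) : {ffun 'I_k -> bool} :=
  [ffun z => [exists p : arcs a, ((val p).2 == x) && (col p == z)]].
apply: (colorable_underlying_fun (c := into)).
  by rewrite card_ffun card_bool card_ord.
move=> x y axy; pose p0 : arcs a := exist _ (x, y) axy.
apply/negP => /eqP /(congr1 (fun S : {ffun 'I_k -> bool} => S (col p0))).
rewrite !ffunE; have -> : [exists p : arcs a, ((val p).2 == y) && (col p == col p0)].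
  by apply/existsP; exists p0; rewrite /= !eqxx.
move=> /existsP [q /andP [/eqP q_to_x /eqP col_q]].
have : underlying (arcrel a) q p0 by rewrite /underlying /arcrel q_to_x eqxx.
by move=> /Hcol; rewrite col_q eqxx.
Qed.

Lemma chiD_arcrel_lb (T : finType) (a : rel T) N :
  is_digraph a -> 2 ^ N <= chiD a -> N <= chiD (arcrel a).
Proof.
move=> Ha leNa; rewrite -(@leq_exp2l 2) //; apply: leq_trans leNa _.
exact/chi_min/colorable_exp2_of_arcrel/colorable_chiD/arcrel_digraph.
Qed.

Lemma chiD_arc2_lb (T : finType) (a : rel T) N :
  is_digraph a -> 2 ^ 2 ^ N <= chiD a -> N <= chiD (arc2 a).
Proof. by move=> Ha leNa; apply/(chiD_arcrel_lb (arcrel_digraph Ha))/chiD_arcrel_lb. Qed.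

Section ArcProducts.
Variables (T U : finType) (a : rel T) (b : rel U).

Definition prod_arc (u : arcs a * arcs b) : arcs (prodrel a b) :=
  exist _ (((val u.1).1, (val u.2).1), ((val u.1).2, (val u.2).2))
    (introT andP (conj (valP u.1) (valP u.2))).

Lemma prod_arc_hom :
  {homo prod_arc : u v / prodrel (arcrel a) (arcrel b) u v >->
                         arcrel (prodrel a b) u v}.
Proof. by move=> u v /andP [/eqP E1 /eqP E2]; rewrite /arcrel /= E1 E2. Qed.

Definition prod_rev_arc (u : arcs a * arcs b) : arcs (prodrel a (revrel b)) :=
  exist _ (((val u.1).1, (val u.2).2), ((val u.1).2, (val u.2).1))
    (introT andP (conj (valP u.1) (valP u.2))).

Lemma prod_rev_arc_hom :
  {homo prod_rev_arc : u v / prodrel (arcrel a) (revrel (arcrel b)) u v >->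
                             arcrel (prodrel a (revrel b)) u v}.
Proof. by move=> u v /andP [/eqP E1 /eqP E2]; rewrite /arcrel /= E1 E2. Qed.

End ArcProducts.

Lemma colorable_arc2_prod (T U : finType) (a : rel T) (b : rel U) c :
  4 <= c -> colorable (underlying (prodrel a b)) c ->
  colorable (underlying (prodrel (arc2 a) (arc2 b))) c.-1.
Proof.
move=> le4c /(colorable_arc2 le4c) col_arc2.
pose h := arc_map (@prod_arc_hom _ _ a b) \o @prod_arc _ _ (arcrel a) (arcrel b).
apply: (colorable_hom (h := h) _ col_arc2); apply: underlying_hom => u v.
move=> /(@prod_arc_hom _ _ (arcrel a) (arcrel b)).
exact: arc_map_hom.
Qed.

Lemma colorable_arc2_prod_rev (T U : finType) (a : rel T) (b : rel U) c :
  4 <= c -> colorable (underlying (prodrel a (revrel b))) c ->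
  colorable (underlying (prodrel (arc2 a) (revrel (arc2 b)))) c.-1.
Proof.
move=> le4c /(colorable_arc2 le4c) col_arc2.
pose h := arc_map (@prod_rev_arc_hom _ _ a b) \o @prod_rev_arc _ _ (arcrel a) (arcrel b).
apply: (colorable_hom (h := h) _ col_arc2); apply: underlying_hom => u v.
move=> /(@prod_rev_arc_hom _ _ (arcrel a) (arcrel b)).
exact: arc_map_hom.
Qed.

Definition three_colorable_reduct (n c : nat) (T U : finType) (a : rel T) (b : rel U) :=
  exists (T' U' : finType) (a' : rel T') (b' : rel U'),
    [/\ is_digraph a', is_digraph b', n <= chiD a', n <= chiD b' &
        (colorable (underlying (prodrel a b)) c ->
           colorable (underlying (prodrel a' b')) 3) /\
        (colorable (underlying (prodrel a (revrel b))) c ->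
           colorable (underlying (prodrel a' (revrel b'))) 3)].

Lemma three_colorable_reduct_refl n c (T U : finType) (a : rel T) (b : rel U) :
  c <= 3 -> is_digraph a -> is_digraph b -> n <= chiD a -> n <= chiD b ->
  three_colorable_reduct n c a b.
Proof.
by move=> lec3 Ha Hb lena lenb; exists T, U, a, b; split=> //; split=> /colorable_widen; apply.
Qed.

Lemma three_colorable_reduct_arc2 n c (T U : finType) (a : rel T) (b : rel U) :
  4 <= c -> three_colorable_reduct n c.-1 (arc2 a) (arc2 b) ->
  three_colorable_reduct n c a b.
Proof.
move=> le4c [T' [U' [a' [b' [Ha' Hb' lena' lenb' [col_prod col_prod_rev]]]]]].
exists T', U', a', b'; split=> //; split=> col.
- exact/col_prod/colorable_arc2_prod.
- exact/col_prod_rev/colorable_arc2_prod_rev.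
Qed.

Lemma exists_three_colorable_reduct n c : exists M,
  forall (T U : finType) (a : rel T) (b : rel U),
    is_digraph a -> is_digraph b -> M <= chiD a -> M <= chiD b ->
    three_colorable_reduct n c a b.
Proof.
elim: c => [|c [M IH]]; first by exists n => *; apply: three_colorable_reduct_refl.
case: (leqP c.+1 3) => [lec3 | lt3c].
  by exists n => *; apply: three_colorable_reduct_refl.
exists (2 ^ 2 ^ M) => T U a b Ha Hb leMa leMb.
apply: three_colorable_reduct_arc2 => //.
by apply: IH; first [exact: arc2_digraph | exact: chiD_arc2_lb].
Qed.

(* Colour [(x, y)] by its pair of colours in the two products: an edge of
   [underlying a * underlying b] is an arc of [a * b] or of [a * b^-1]. *)
Lemma colorable_prodrel_underlying (T U : finType) (a : rel T) (b : rel U) :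
  colorable (underlying (prodrel a b)) 3 ->
  colorable (underlying (prodrel a (revrel b))) 3 ->
  colorable (prodrel (underlying a) (underlying b)) 9.
Proof.
move=> /colorableP [c1 H1] /colorableP [c2 H2].
apply: (colorable_fun (c := fun p => (c1 p, c2 p))); first by rewrite card_prod !card_ord.
move=> [x y] [x' y']; rewrite /prodrel /underlying /revrel /= xpair_eqE negb_and.
case/andP => /orP [axx' | ax'x] /orP [byy' | by'y].
- by rewrite H1 // /underlying /prodrel /= axx' byy'.
- by rewrite H2 ?orbT // /underlying /prodrel /revrel /= axx' by'y.
- by rewrite H2 ?orbT // /underlying /prodrel /revrel /= ax'x byy' ?orbT.
- by rewrite H1 // /underlying /prodrel /= ax'x by'y ?orbT.
Qed.

Lemma underlying_prodrel_graph (T U : finType) (e : rel T) (e' : rel U) :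
  is_graph e -> is_graph e' -> underlying (prodrel e e') =2 prodrel e e'.
Proof.
by move=> [_ e_sym] [_ e'_sym] [x y] [x' y']; rewrite /underlying /prodrel /= e_sym e'_sym orbb.
Qed.

Lemma underlying_prodrel_rev_graph (T U : finType) (e : rel T) (e' : rel U) :
  is_graph e -> is_graph e' -> underlying (prodrel e (revrel e')) =2 prodrel e e'.
Proof.
move=> [_ e_sym] [_ e'_sym] [x y] [x' y'].
by rewrite /underlying /prodrel /revrel /= e_sym (e'_sym y') orbb.
Qed.

Lemma is_min_exists (P : nat -> Prop) k : P k -> exists m, is_min P m.
Proof.
elim/ltn_ind: k => k IH Pk.
case: (classic (exists2 j, j < k & P j)) => [[j ltjk Pj] | no_less]; first exact: IH Pj.
exists k; split=> // j Pj; rewrite leqNgt; apply/negP => ltjk.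
by apply: no_less; exists j.
Qed.

Lemma natmin_spec (P : nat -> Prop) k : P k -> is_min P (natmin P).
Proof. by move=> Pk; apply: epsilon_spec; apply: is_min_exists Pk. Qed.

Lemma natmin_le (P : nat -> Prop) k : P k -> natmin P <= k.
Proof. by move=> Pk; apply: (natmin_spec Pk).2. Qed.

Lemma bounded_or_tends_to_infty (u : nat -> nat) B :
  (forall n c, exists M, forall m, M <= m -> u m <= c -> u n <= B) ->
  (forall n, u n <= B) \/ tends_to_infty u.
Proof.
move=> small_u; case: (classic (tends_to_infty u)) => [|not_infty]; [by right | left].
have [c often_le_c] : exists c, forall N, exists2 m, N <= m & u m <= c.
  apply: NNPP => no_c; apply: not_infty => c; apply: NNPP => no_N; apply: no_c.
  exists c => N; apply: NNPP => no_m; apply: no_N; exists N => m leNm.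
  by rewrite ltnNge; apply/negP => le_umc; apply: no_m; exists m.
move=> n; have [M HM] := small_u n c; have [m leMm le_umc] := often_le_c M.
exact: HM le_umc.
Qed.

Lemma g_vals_Kn n : g_vals n (chiD (prodrel (Kn n) (Kn n))).
Proof.
by exists 'I_n, 'I_n, (Kn n), (Kn n); split=> //; first [exact: Kn_digraph | exact: Kn_chiD].
Qed.

Lemma h_vals_Kn n :
  h_vals n (maxn (chiD (prodrel (Kn n) (Kn n))) (chiD (prodrel (Kn n) (revrel (Kn n))))).
Proof.
by exists 'I_n, 'I_n, (Kn n), (Kn n); split=> //; first [exact: Kn_digraph | exact: Kn_chiD].
Qed.

Lemma f_vals_Kn n : f_vals n (chi (prodrel (Kn n) (Kn n))).
Proof.
by exists 'I_n, 'I_n, (Kn n), (Kn n); split=> //; first [exact: Kn_graph | exact: Kn_chi].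
Qed.

Lemma g_le3_of_bounded n c : exists M, forall m, M <= m -> g m <= c -> g n <= 3.
Proof.
have [M reduct] := exists_three_colorable_reduct n c; exists M => m leMm.
have [[T [U [a [b [Ha Hb lema lemb chi_ab]]]]] _] := natmin_spec (g_vals_Kn m).
rewrite /g -chi_ab => le_ab.
have col_ab := colorable_widen (colorable_chiD (prodrel_digraph b Ha)) le_ab.
have [T' [U' [a' [b' [Ha' Hb' lena' lenb' [col3 _]]]]]] :=
  reduct T U a b Ha Hb (leq_trans leMm lema) (leq_trans leMm lemb).
apply: leq_trans (chi_min (col3 col_ab)).
by apply: natmin_le; exists T', U', a', b'.
Qed.

Lemma h_le3_of_bounded n c : exists M, forall m, M <= m -> h m <= c -> h n <= 3.
Proof.
have [M reduct] := exists_three_colorable_reduct n c; exists M => m leMm.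
have [[T [U [a [b [Ha Hb lema lemb chi_ab]]]]] _] := natmin_spec (h_vals_Kn m).
rewrite /h -chi_ab geq_max => /andP [le_ab le_ab_rev].
have [T' [U' [a' [b' [Ha' Hb' lena' lenb' [col3 col3_rev]]]]]] :=
  reduct T U a b Ha Hb (leq_trans leMm lema) (leq_trans leMm lemb).
have col_ab := colorable_widen (colorable_chiD (prodrel_digraph b Ha)) le_ab.
have col_ab_rev := colorable_widen (colorable_chiD (prodrel_digraph (revrel b) Ha)) le_ab_rev.
apply: leq_trans (_ : maxn (chiD (prodrel a' b')) (chiD (prodrel a' (revrel b'))) <= 3).
  by apply: natmin_le; exists T', U', a', b'.
by rewrite geq_max !chi_min ?col3 ?col3_rev.
Qed.

Lemma f_le9_of_bounded n c : exists M, forall m, M <= m -> f m <= c -> f n <= 9.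
Proof.
have [M reduct] := exists_three_colorable_reduct n c; exists M => m leMm.
have [[T [U [e [e' [Ge Ge' leme leme' chi_ee']]]]] _] := natmin_spec (f_vals_Kn m).
rewrite /f -chi_ee' => le_ee'.
have col_ee' := colorable_widen (colorable_chi (prodrel_digraph e' Ge.1)) le_ee'.
have leMe : M <= chiD e by rewrite chiD_graph //; apply: leq_trans leMm leme.
have leMe' : M <= chiD e' by rewrite chiD_graph //; apply: leq_trans leMm leme'.
have [T' [U' [a' [b' [Ha' Hb' lena' lenb' [col3 col3_rev]]]]]] :=
  reduct T U e e' Ge.1 Ge'.1 leMe leMe'.
have col_ab : colorable (underlying (prodrel e e')) c.
  by rewrite (eq_colorable _ (underlying_prodrel_graph Ge Ge')).
have col_ab_rev : colorable (underlying (prodrel e (revrel e'))) c.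
  by rewrite (eq_colorable _ (underlying_prodrel_rev_graph Ge Ge')).
have col9 := colorable_prodrel_underlying (col3 col_ab) (col3_rev col_ab_rev).
apply: leq_trans (chi_min col9).
apply: natmin_le; exists T', U', (underlying a'), (underlying b').
by split; try exact: underlying_graph.
Qed.

Theorem mainTheorem13 :
  ((forall n, g n <= 3) \/ tends_to_infty g) /\
  ((forall n, h n <= 3) \/ tends_to_infty h) /\
  ((forall n, f n <= 9) \/ tends_to_infty f).
Proof.
split; [|split]; apply: bounded_or_tends_to_infty.
- exact: g_le3_of_bounded.
- exact: h_le3_of_bounded.
- exact: f_le9_of_bounded.
Qed.
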